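(* Let $\mathbb{C}$ be a modified category of interest and $\mathcal{X}=(\partial\colon E\to R)$, $\mathcal{X}'=(\partial'\colon E'\to R')$ crossed modules in $\mathbb{C}$. There is a groupoid $\mathrm{HOM}(\mathcal{X},\mathcal{X}')$ whose objects are the crossed module morphisms $\mathcal{X}\to\mathcal{X}'$ and whose morphisms from $f$ to $g$ are the homotopies $(f_0,s)$ connecting $f$ to $g$ (identities given by the zero derivation, inverses by $s\mapsto -s$, composition by pointwise sum $s+s'$). In particular, the relation on crossed module morphisms $\mathcal{X}\to\mathcal{X}'$ given by ''$f\simeq g$ if and only if there exists an $f_0$-derivation $s$ connecting $f$ to $g$'' is an equivalence relation.
   Context: A modified category of interest (MCI) is a category $\mathbb{C}$ of groups (written additively) with additional unary and binary operations: $\Omega=\Omega_0\cup\Omega_1\cup\Omega_2$, $\Omega_0=\{0\}$, $\Omega_2'=\Omega_2\setminus\{+\}$ closed under $x*^\circ y=y*x$, with $x*(y+z)=x*y+x*z$, unary operations other than $-$ compatible with $+$ and $*$, $x_1+(x_2*x_3)=(x_2*x_3)+x_1$, and each $(x_1*x_2)\bar*x_3$ expressible as a word in the products $x_i(x_jx_k),(x_jx_k)x_i$, $i\in\{1,2\}$. A derived action of $R$ on $E$ consists of maps $r\cdot e=\sigma(r)+e-\sigma(r)$, $r*e=\sigma(r)*e$ ($*\in\Omega_2'$) induced by a split extension of $R$ by $E$ with section $\sigma$. A crossed module is a morphism $\partial\colon E\to R$ with a derived action satisfying $\partial(r\cdot e)=r+\partial(e)-r$, $\partial(r*e)=r*\partial(e)$,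 $\partial(e)\cdot e'=e+e'-e$, $\partial(e)*e'=e*e'$. A crossed module morphism $(f_1,f_0)$ satisfies $\partial'f_1=f_0\partial$, $f_1(r\cdot e)=f_0(r)\cdot f_1(e)$, $f_1(r*e)=f_0(r)*f_1(e)$. For a morphism $f_0\colon R\to R'$, an $f_0$-derivation is a map $s\colon R\to E'$ with $s(g+h)=\big(f_0(-h)\cdot s(g)\big)+s(h)$ and $s(g*h)=f_0(g)*s(h)+f_0(h)*^\circ s(g)+s(g)*s(h)$ for all $g,h\in R$, $*\in\Omega_2'$. An $f_0$-derivation $s$ connects $f$ to $g$ (a homotopy $(f_0,s)$ from $f$ to $g$) if $g_0(r)=f_0(r)+\partial'(s(r))$ and $g_1(e)=f_1(e)+s(\partial(e))$ for all $r\in R$, $e\in E$. *)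

From Stdlib Require Import List RelationClasses.
Import ListNotations.
Set Implicit Arguments.
Unset Strict Implicit.

(** Omega-groups: a (not necessarily abelian) group written additively, with
    unary operations indexed by [U] (the operations of Omega_1 other than -)
    and binary operations indexed by [Bn] (the set Omega_2' = Omega_2 \ {+}). *)
Record OGroup (U Bn : Type) := {
  car :> Type;
  gzero : car;
  gadd : car -> car -> car;
  gneg : car -> car;
  gun : U -> car -> car;
  gbin : Bn -> car -> car -> car;
  gaddA : forall x y z, gadd x (gadd y z) = gadd (gadd x y) z;
  gadd0l : forall x, gadd gzero x = x;
  gadd0r : forall x, gadd x gzero = x;
  gaddNl : forall x, gadd (gneg x) x = gzero;
  gaddNr : forall x, gadd x (gneg x) = gzero }.
Arguments gzero {U Bn} o.
Arguments gadd {U Bn} o _ _.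
Arguments gneg {U Bn} o _.
Arguments gun {U Bn} o _ _.
Arguments gbin {U Bn} o _ _ _.

Definition is_hom (U Bn : Type) (A B : OGroup U Bn) (f : A -> B) : Prop :=
  (forall x y, f (gadd A x y) = gadd B (f x) (f y)) /\
  (forall u x, f (gun A u x) = gun B u (f x)) /\
  (forall b x y, f (gbin A b x y) = gbin B b (f x) (f y)).

(** Generators for the "word" axiom: a product x_i (x_j x_k) or (x_j x_k) x_i
    with i in {1,2}, {i,j,k} = {1,2,3}.
    wt_i1 = true : i = 1 (else i = 2); the other two variables are
    y (the other of x1,x2) and x3, ordered (y,x3) or, if wt_swap, (x3,y);
    wt_left = true : x_i is on the left of the outer product. *)
Record wterm (Bn : Type) := WT {
  wt_i1 : bool; wt_swap : bool; wt_left : bool; wt_out : Bn; wt_in : Bn }.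

Definition wt_eval (U Bn : Type) (A : OGroup U Bn) (t : wterm Bn) (x1 x2 x3 : A) : A :=
  let xi := if wt_i1 t then x1 else x2 in
  let y := if wt_i1 t then x2 else x1 in
  let inner := if wt_swap t then gbin A (wt_in t) x3 y else gbin A (wt_in t) y x3 in
  if wt_left t then gbin A (wt_out t) xi inner else gbin A (wt_out t) inner xi.
Arguments wt_eval {U Bn} A t x1 x2 x3.

(** A word in such generators: a finite sum of generators and their negatives
    (flag true = negated generator). *)
Definition w_eval (U Bn : Type) (A : OGroup U Bn) (W : list (bool * wterm Bn)) (x1 x2 x3 : A) : A :=
  fold_right (fun (p : bool * wterm Bn) (acc : car A) =>
                let v := wt_eval A (snd p) x1 x2 x3 in
                gadd A (if fst p then gneg A v else v) acc) (gzero A) W.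
Arguments w_eval {U Bn} A W x1 x2 x3.

Record MCI := {
  mU : Type;
  mB : Type;
  mopp : mB -> mB;
  inC : OGroup mU mB -> Prop;
  mci_opp : forall A, inC A -> forall b (x y : A), gbin A (mopp b) x y = gbin A b y x;
  mci_distr : forall A, inC A -> forall b (x y z : A),
      gbin A b x (gadd A y z) = gadd A (gbin A b x y) (gbin A b x z);
  mci_un_add : forall A, inC A -> forall u (x y : A),
      gun A u (gadd A x y) = gadd A (gun A u x) (gun A u y);
  mci_un_bin : forall A, inC A -> forall u b (x y : A),
      gun A u (gbin A b x y) = gbin A b (gun A u x) y;
  mci_comm : forall A, inC A -> forall b (x1 x2 x3 : A),
      gadd A x1 (gbin A b x2 x3) = gadd A (gbin A b x2 x3) x1;
  mci_word : forall b bb : mB, exists W : list (bool * wterm mB),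
      forall A, inC A -> forall x1 x2 x3 : A,
        gbin A bb (gbin A b x1 x2) x3 = w_eval A W x1 x2 x3 }.

Arguments inC : clear implicits.
Arguments mopp : clear implicits.

Section XM.
Variable C : MCI.
Notation OG := (OGroup (mU C) (mB C)).

Definition derived_action (E R : OG) (dot : R -> E -> E) (act : mB C -> R -> E -> E) : Prop :=
  exists Bx : OG, inC C Bx /\
  exists (i : E -> Bx) (p : Bx -> R) (sg : R -> Bx),
    is_hom i /\ is_hom p /\ is_hom sg /\
    (forall e e', i e = i e' -> e = e') /\
    (forall b, p b = gzero R <-> exists e, i e = b) /\
    (forall r, p (sg r) = r) /\
    (forall r e, i (dot r e) = gadd Bx (gadd Bx (sg r) (i e)) (gneg Bx (sg r))) /\
    (forall b r e, i (act b r e) = gbin Bx b (sg r) (i e)).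

Record XMod := {
  xE : OG;
  xR : OG;
  xE_in : inC C xE;
  xR_in : inC C xR;
  xd : xE -> xR;
  xd_hom : is_hom xd;
  xdot : xR -> xE -> xE;
  xact : mB C -> xR -> xE -> xE;
  x_der : derived_action xdot xact;
  x_1 : forall r e, xd (xdot r e) = gadd xR (gadd xR r (xd e)) (gneg xR r);
  x_2 : forall b r e, xd (xact b r e) = gbin xR b r (xd e);
  x_3 : forall e e', xdot (xd e) e' = gadd xE (gadd xE e e') (gneg xE e);
  x_4 : forall b e e', xact b (xd e) e' = gbin xE b e e' }.
Arguments xd : clear implicits.
Arguments xdot : clear implicits.
Arguments xact : clear implicits.

Record XMor (X X' : XMod) := {
  mf1 : xE X -> xE X';
  mf0 : xR X -> xR X';
  mf1_hom : is_hom mf1;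
  mf0_hom : is_hom mf0;
  mf_d : forall e, xd X' (mf1 e) = mf0 (xd X e);
  mf_dot : forall r e, mf1 (xdot X r e) = xdot X' (mf0 r) (mf1 e);
  mf_act : forall b r e, mf1 (xact X b r e) = xact X' b (mf0 r) (mf1 e) }.
Arguments mf1 {X X'} _ _.
Arguments mf0 {X X'} _ _.

Definition is_derivation (X X' : XMod) (f0 : xR X -> xR X') (s : xR X -> xE X') : Prop :=
  (forall g h, s (gadd (xR X) g h) =
               gadd (xE X') (xdot X' (f0 (gneg (xR X) h)) (s g)) (s h)) /\
  (forall b g h, s (gbin (xR X) b g h) =
     gadd (xE X')
       (gadd (xE X') (xact X' b (f0 g) (s h)) (xact X' (mopp C b) (f0 h) (s g)))
       (gbin (xE X') b (s g) (s h))).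

Definition homotopy (X X' : XMod) (f g : XMor X X') (s : xR X -> xE X') : Prop :=
  is_derivation (mf0 f) s /\
  (forall r, mf0 g r = gadd (xR X') (mf0 f r) (xd X' (s r))) /\
  (forall e, mf1 g e = gadd (xE X') (mf1 f e) (s (xd X e))).

Definition homotopic (X X' : XMod) (f g : XMor X X') : Prop :=
  exists s, homotopy f g s.

End XM.

(* By d'(r.e) = r + d'e - r and the Peiffer identity, the action
   of r + d'e on E' is the action of r followed by conjugation by r.e; this turns
   the g0-derivation identities of -s and s + s' back into f0-derivation
   identities.  The identities for the binary operations only involve values of
   the derived action and products in E'; these are all central (they come from
   products in the split extension, and x1 + x2*x3 = x2*x3 + x1 in C), so those
   identities are equalities in an abelian group. *)
From Stdlib Require Import List RelationClasses Sorting.Mergesort Permutation.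
Import ListNotations.

Section OGroupTheory.
Context {U Bn : Type} (G : OGroup U Bn).
Local Notation "x ⊕ y" := (gadd G x y) (at level 50, left associativity).
Local Notation "⊖ x" := (gneg G x) (at level 35, x at level 35).
Local Notation "'O'" := (gzero G).

Lemma gadd_reg_l a x y : a ⊕ x = a ⊕ y -> x = y.
Proof.
  intros H. rewrite <- (gadd0l (o:=G) x), <- (gadd0l (o:=G) y), <- (gaddNl (o:=G) a),
    <- !gaddA, H. reflexivity.
Qed.

Lemma gadd_reg_r a x y : x ⊕ a = y ⊕ a -> x = y.
Proof.
  intros H. rewrite <- (gadd0r (o:=G) x), <- (gadd0r (o:=G) y), <- (gaddNr (o:=G) a),
    !gaddA, H. reflexivity.
Qed.

Lemma gneg_unique_r x y : x ⊕ y = O -> y = ⊖ x.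
Proof. intros H. apply (gadd_reg_l x). rewrite H, gaddNr. reflexivity. Qed.

Lemma gneg_unique_l x y : x ⊕ y = O -> x = ⊖ y.
Proof. intros H. apply (gadd_reg_r y). rewrite H, gaddNl. reflexivity. Qed.

Lemma gneg_involutive x : ⊖ ⊖ x = x.
Proof. symmetry. apply gneg_unique_r, gaddNl. Qed.

Lemma gneg_zero : ⊖ O = O.
Proof. symmetry. apply gneg_unique_r, gadd0l. Qed.

Lemma gneg_add x y : ⊖ (x ⊕ y) = ⊖ y ⊕ ⊖ x.
Proof.
  symmetry. apply gneg_unique_r.
  rewrite !gaddA, <- (gaddA (o:=G) x), gaddNr, gadd0r, gaddNr. reflexivity.
Qed.

Lemma gadd_idempotent x : x ⊕ x = x -> x = O.
Proof. intros H. apply (gadd_reg_l x). rewrite H, gadd0r. reflexivity. Qed.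

Lemma gadd_negK x y : x ⊕ y ⊕ ⊖ y = x.
Proof. rewrite <- gaddA, gaddNr, gadd0r. reflexivity. Qed.

Lemma gadd_negNK x y : x ⊕ ⊖ y ⊕ y = x.
Proof. rewrite <- gaddA, gaddNl, gadd0r. reflexivity. Qed.

Lemma gconj_add c x y : c ⊕ (x ⊕ y) ⊕ ⊖ c = (c ⊕ x ⊕ ⊖ c) ⊕ (c ⊕ y ⊕ ⊖ c).
Proof. rewrite !gaddA, <- (gaddA (o:=G) _ (⊖ c) c), gaddNl, gadd0r. reflexivity. Qed.

Definition central (x : G) : Prop := forall y, x ⊕ y = y ⊕ x.

Lemma central_zero : central O.
Proof. intros y. rewrite gadd0l, gadd0r. reflexivity. Qed.

Lemma central_neg x : central x -> central (⊖ x).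
Proof.
  intros H y. apply (gadd_reg_l x).
  rewrite gaddA, gaddNr, gadd0l, gaddA, H, <- gaddA, gaddNr, gadd0r. reflexivity.
Qed.

(* Sums of finitely many central elements, indexed by a list of natural numbers
   so that a reordering of the summands can be checked by computation. *)
Definition sum_at (t : nat -> G) (l : list nat) : G :=
  fold_right (fun i acc => t i ⊕ acc) O l.

Lemma sum_at_perm t l l' :
  (forall i, central (t i)) -> Permutation l l' -> sum_at t l = sum_at t l'.
Proof.
  intros Ht HP. induction HP; simpl.
  - reflexivity.
  - rewrite IHHP. reflexivity.
  - rewrite !gaddA, (Ht y). reflexivity.
  - congruence.
Qed.

Lemma sum_at_sort t l l' :
  (forall i, central (t i)) -> NatSort.sort l = NatSort.sort l' -> sum_at t l = sum_at t l'.
Proof.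
  intros Ht Hs. apply sum_at_perm; [exact Ht|].
  apply (Permutation_trans (NatSort.Permuted_sort l)). rewrite Hs.
  apply Permutation_sym, NatSort.Permuted_sort.
Qed.

End OGroupTheory.

(* [central_ac G t l1 l2 tac] proves an equation whose sides are, up to
   reassociation, the sums of the terms [t i] for [i] in [l1], [l2]; [tac] must
   prove that the terms (at most eight of them) are central. *)
Ltac central_ac G t l1 l2 tac :=
  let unfold_sum := unfold sum_at; cbn [fold_right]; rewrite ?gadd0r, ?gaddA; reflexivity in
  transitivity (sum_at G t l1); [unfold_sum|];
  transitivity (sum_at G t l2);
  [ apply sum_at_sort;
    [ intros [|[|[|[|[|[|[|[|]]]]]]]]; cbn;
      tac
    | vm_compute; reflexivity ]
  | unfold_sum ].

Section Homomorphisms.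
Context {U Bn : Type} {A B : OGroup U Bn} {f : A -> B}.
Hypothesis f_add : forall x y, f (gadd A x y) = gadd B (f x) (f y).

Lemma hom_zero : f (gzero A) = gzero B.
Proof. apply gadd_idempotent. rewrite <- f_add, gadd0l. reflexivity. Qed.

Lemma hom_neg x : f (gneg A x) = gneg B (f x).
Proof. apply gneg_unique_r. rewrite <- f_add, gaddNr. apply hom_zero. Qed.

Lemma central_inj :
  (forall e e', f e = f e' -> e = e') -> forall x, central B (f x) -> central A x.
Proof. intros Hinj x Hc y. apply Hinj. rewrite !f_add. apply Hc. Qed.

End Homomorphisms.

Section ObjectsOfC.
Context {C : MCI} {A : OGroup (mU C) (mB C)} (HA : inC C A).

Lemma gbin_addl b (x x' y : A) :
  gbin A b (gadd A x x') y = gadd A (gbin A b x y) (gbin A b x' y).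
Proof.
  rewrite <- (mci_opp HA b y (gadd A x x')), (mci_distr HA), !(mci_opp HA b). reflexivity.
Qed.

Lemma gbin_0r b (x : A) : gbin A b x (gzero A) = gzero A.
Proof. apply gadd_idempotent. rewrite <- (mci_distr HA), gadd0l. reflexivity. Qed.

Lemma gbin_0l b (x : A) : gbin A b (gzero A) x = gzero A.
Proof. apply gadd_idempotent. rewrite <- gbin_addl, gadd0l. reflexivity. Qed.

Lemma gbin_negr b (x y : A) : gbin A b x (gneg A y) = gneg A (gbin A b x y).
Proof. apply gneg_unique_r. rewrite <- (mci_distr HA), gaddNr, gbin_0r. reflexivity. Qed.

Lemma gbin_negl b (x y : A) : gbin A b (gneg A x) y = gneg A (gbin A b x y).
Proof. apply gneg_unique_r. rewrite <- gbin_addl, gaddNr, gbin_0l. reflexivity. Qed.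

Lemma central_gbin b (x y : A) : central A (gbin A b x y).
Proof. intros z. symmetry. apply (mci_comm HA). Qed.

End ObjectsOfC.

Section DerivedActions.
Context {C : MCI} {E R : OGroup (mU C) (mB C)}
  {dot : R -> E -> E} {act : mB C -> R -> E -> E} (Hder : derived_action dot act).

Ltac unpack_derived_action :=
  destruct Hder as (Bx & HB & i & p & sg & [i_add _] & _ & [sg_add _] & i_inj & _ & _
                    & i_dot & i_act);
  apply i_inj.

Lemma dot_add r (e e' : E) : dot r (gadd E e e') = gadd E (dot r e) (dot r e').
Proof. unpack_derived_action. rewrite i_add, !i_dot, i_add. apply gconj_add. Qed.

Lemma dot_0 r : dot r (gzero E) = gzero E.
Proof. apply gadd_idempotent. rewrite <- dot_add, gadd0l. reflexivity. Qed.

Lemma dot_neg r (e : E) : dot r (gneg E e) = gneg E (dot r e).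
Proof. apply gneg_unique_r. rewrite <- dot_add, gaddNr. apply dot_0. Qed.

Lemma dot_addl r r' (e : E) : dot (gadd R r r') e = dot r (dot r' e).
Proof. unpack_derived_action. rewrite !i_dot, sg_add, gneg_add, !gaddA. reflexivity. Qed.

Lemma dot_0l (e : E) : dot (gzero R) e = e.
Proof.
  unpack_derived_action. rewrite i_dot, (hom_zero sg_add), gneg_zero, gadd0l, gadd0r.
  reflexivity.
Qed.

Lemma act_add b r (e e' : E) : act b r (gadd E e e') = gadd E (act b r e) (act b r e').
Proof. unpack_derived_action. rewrite i_add, !i_act, i_add, (mci_distr HB). reflexivity. Qed.

Lemma act_addl b r r' (e : E) : act b (gadd R r r') e = gadd E (act b r e) (act b r' e).
Proof. unpack_derived_action. rewrite i_add, !i_act, sg_add, (gbin_addl HB). reflexivity. Qed.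

Lemma act_0 b r : act b r (gzero E) = gzero E.
Proof. apply gadd_idempotent. rewrite <- act_add, gadd0l. reflexivity. Qed.

Lemma act_neg b r (e : E) : act b r (gneg E e) = gneg E (act b r e).
Proof. apply gneg_unique_r. rewrite <- act_add, gaddNr. apply act_0. Qed.

Lemma central_act b r (e : E) : central E (act b r e).
Proof.
  destruct Hder as (Bx & HB & i & p & sg & [i_add _] & _ & _ & i_inj & _ & _ & _ & i_act).
  apply (central_inj i_add i_inj). rewrite i_act. apply (central_gbin HB).
Qed.

End DerivedActions.

Section Homotopies.
Variable C : MCI.
Variables X X' : XMod C.
Local Notation R := (xR X).
Local Notation R' := (xR X').
Local Notation E' := (xE X').
Local Notation dot' := (@xdot C X').
Local Notation act' := (@xact C X').
Local Notation d' := (@xd C X').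

Lemma dot_add_boundary r e e' :
  dot' (gadd R' r (d' e)) e' = gadd E' (gadd E' (dot' r e) (dot' r e')) (gneg E' (dot' r e)).
Proof.
  rewrite (dot_addl (x_der X')), x_3, !(dot_add (x_der X')), (dot_neg (x_der X')).
  reflexivity.
Qed.

Section Derivations.
Context {f0 : R -> R'} (f0_add : forall x y, f0 (gadd R x y) = gadd R' (f0 x) (f0 y)).
Context {s : R -> E'} (s_der : is_derivation f0 s).

Lemma derivation_0 : s (gzero R) = gzero E'.
Proof.
  destruct s_der as [s_add _]. apply gadd_idempotent.
  pose proof (s_add (gzero R) (gzero R)) as H.
  rewrite gadd0l, (hom_neg f0_add), (hom_zero f0_add), gneg_zero, (dot_0l (x_der X')) in H.
  symmetry. exact H.
Qed.

Lemma derivation_neg h : dot' (f0 (gneg R h)) (s (gneg R h)) = gneg E' (s h).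
Proof.
  destruct s_der as [s_add _]. apply gneg_unique_l.
  pose proof (s_add (gneg R h) h) as H. rewrite gaddNl, derivation_0 in H.
  symmetry. exact H.
Qed.

End Derivations.

Lemma homotopy_refl (f : XMor X X') : homotopy f f (fun _ => gzero E').
Proof.
  split; [split|split].
  - intros g h. rewrite (dot_0 (x_der X')), gadd0l. reflexivity.
  - intros b g h. rewrite !(act_0 (x_der X')), (gbin_0r (xE_in X')), !gadd0l. reflexivity.
  - intros r. rewrite (hom_zero (proj1 (xd_hom X'))), gadd0r. reflexivity.
  - intros e. rewrite gadd0r. reflexivity.
Qed.

Lemma homotopy_sym (f g : XMor X X') s :
  homotopy f g s -> homotopy g f (fun r => gneg E' (s r)).
Proof.
  intros [[s_add s_bin] [g0_def g1_def]].
  pose proof (x_der X') as Hder. pose proof (xE_in X') as HE.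
  pose proof (central_act Hder) as act_central. pose proof (central_gbin HE) as gbin_central.
  split; [split|split].
  - intros a h.
    rewrite s_add, g0_def, dot_add_boundary,
      (derivation_neg (proj1 (mf0_hom f)) (conj s_add s_bin)), gneg_involutive,
      (dot_neg Hder), gadd_negK, gneg_add.
    reflexivity.
  - intros b a h.
    rewrite s_bin, !g0_def, !(act_addl Hder), !(act_neg Hder), !x_4, (mci_opp HE),
      (gbin_negl HE), (gbin_negr HE), gneg_involutive, !gneg_add, <- gaddA, gadd_negNK.
    central_ac (xE X')
      (fun i => match i with
         | 0 => gneg E' (act' b (mf0 f a) (s h))
         | 1 => gneg E' (act' (mopp C b) (mf0 f h) (s a))
         | 2 => gneg E' (gbin E' b (s a) (s h))
         | _ => gzero E' end) [2;1;0] [0;2;1]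
      ltac:(auto using central_neg, central_zero, act_central, gbin_central).
  - intros r. rewrite g0_def, (hom_neg (proj1 (xd_hom X'))), gadd_negK. reflexivity.
  - intros e. rewrite g1_def, gadd_negK. reflexivity.
Qed.

Lemma homotopy_trans (f g h : XMor X X') s s' :
  homotopy f g s -> homotopy g h s' -> homotopy f h (fun r => gadd E' (s r) (s' r)).
Proof.
  intros [[s_add s_bin] [g0_def g1_def]] [[s'_add s'_bin] [h0_def h1_def]].
  pose proof (x_der X') as Hder. pose proof (xE_in X') as HE.
  pose proof (central_act Hder) as act_central. pose proof (central_gbin HE) as gbin_central.
  split; [split|split].
  - intros a c.
    rewrite s_add, s'_add, g0_def, dot_add_boundary,
      (derivation_neg (proj1 (mf0_hom f)) (conj s_add s_bin)), gneg_involutive,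
      (dot_add Hder), !gaddA, gadd_negK.
    reflexivity.
  - intros b a c.
    rewrite s_bin, s'_bin, !g0_def, !(act_addl Hder), !(act_add Hder), !x_4,
      !(mci_opp HE b), !(mci_distr HE), !(gbin_addl HE).
    central_ac (xE X')
      (fun i => match i with
         | 0 => act' b (mf0 f a) (s c)
         | 1 => act' (mopp C b) (mf0 f c) (s a)
         | 2 => gbin E' b (s a) (s c)
         | 3 => act' b (mf0 f a) (s' c)
         | 4 => gbin E' b (s a) (s' c)
         | 5 => act' (mopp C b) (mf0 f c) (s' a)
         | 6 => gbin E' b (s' a) (s c)
         | 7 => gbin E' b (s' a) (s' c)
         | _ => gzero E' end) [0;1;2;3;4;5;6;7] [0;3;1;5;2;6;4;7]
      ltac:(auto using central_zero, act_central, gbin_central).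
  - intros r. rewrite h0_def, g0_def, (proj1 (xd_hom X')), gaddA. reflexivity.
  - intros e. rewrite h1_def, g1_def, gaddA. reflexivity.
Qed.

End Homotopies.

Theorem mainTheorem5 (C : MCI) (X X' : XMod C) :
  (* identities: the zero derivation *)
  (forall f : XMor X X', homotopy f f (fun _ => gzero (xE X'))) /\
  (* inverses: s |-> -s *)
  (forall (f g : XMor X X') s, homotopy f g s ->
     homotopy g f (fun r => gneg (xE X') (s r))) /\
  (* composition: pointwise sum *)
  (forall (f g h : XMor X X') s s', homotopy f g s -> homotopy g h s' ->
     homotopy f h (fun r => gadd (xE X') (s r) (s' r))) /\
  (* groupoid laws (associativity, units, inverses) *)
  (forall (s s' s'' : xR X -> xE X') r,
     gadd (xE X') (gadd (xE X') (s r) (s' r)) (s'' r)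
     = gadd (xE X') (s r) (gadd (xE X') (s' r) (s'' r))) /\
  (forall (s : xR X -> xE X') r,
     gadd (xE X') (s r) (gzero (xE X')) = s r /\ gadd (xE X') (gzero (xE X')) (s r) = s r) /\
  (forall (s : xR X -> xE X') r,
     gadd (xE X') (s r) (gneg (xE X') (s r)) = gzero (xE X') /\
     gadd (xE X') (gneg (xE X') (s r)) (s r) = gzero (xE X')) /\
  (* in particular, homotopy of crossed module morphisms is an equivalence *)
  Equivalence (@homotopic C X X').
Proof.
  split; [exact (@homotopy_refl C X X')|].
  split; [exact (@homotopy_sym C X X')|].
  split; [exact (@homotopy_trans C X X')|].
  split; [intros; symmetry; apply gaddA|].
  split; [intros; split; [apply gadd0r|apply gadd0l]|].
  split; [intros; split; [apply gaddNr|apply gaddNl]|].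
  split.
  - intros f. exists (fun _ => gzero (xE X')). apply homotopy_refl.
  - intros f g [s Hs]. eexists. apply homotopy_sym, Hs.
  - intros f g h [s Hs] [s' Hs']. eexists. eapply homotopy_trans; eassumption.
Qed.
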